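(* Let $\Psi := \forall x\,\gamma(x)\wedge\bigwedge_{i=1}^n\forall x\forall y\,(e_i(x,y)\to\alpha_i(x,y))\wedge\forall x\,\deg(x)\in S$, where $\gamma$ and the $\alpha_i$ are quantifier-free, each $e_i(x,y)$ is either $x=y$ or an atom $R(x,y)$ or $R(y,x)$ with $R$ binary, and $S=\bigcup_{i=1}^p S_i$ with $S_i = L(\bar v_{i,0};\bar v_{i,1},\ldots,\bar v_{i,k_i})\subseteq\mathbb{N}^{\ell}$. Let $\Psi^*$ be the conjunction of $\forall x\,\gamma(x)$, of $\bigwedge_{i=1}^n\forall x\forall y\,(e_i(x,y)\to\alpha_i(x,y))$, and of the two conditions: ($\xi$) for every element $a$, $\deg(a)\in\{\bar v_{i,0}\}\cup\{\bar v_{i,1},\ldots,\bar v_{i,k_i}\}$ for some $1\le i\le p$; ($\phi$) for every element $a$ with $\deg(a)\neq\bar v_{i,0}$ for all $1\le i\le p$, there exist an element $b$ with the same 1-type as $a$ and an index $j\in\{1,\dots,p\}$ such that $\deg(a)\in\{\bar v_{j,1},\ldots,\bar v_{j,k_j}\}$ and $\deg(b)=\bar v_{j,0}$. Then $\Psi$ has a finite model if and only if $\Psi^*$ has a finite model.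
   Context: Signature: finitely many unary and binary relation symbols plus equality. A 1-type is a maximal consistent set of atoms/negated atoms in one variable $x$ (unary atoms $U(x)$ and atoms $R(x,x)$). A 2-type is a maximal consistent set of atoms/negated atoms $R(x,y)$, $R(y,x)$ for binary $R$, together with $x\neq y$. The null type $\eta_{null}$ contains only negated atoms; all other 2-types are non-null; let $\eta_1,\ldots,\eta_\ell$ enumerate the non-null 2-types. In a structure $\mathcal{M}$, for $a\in M$, $\deg_{\mathcal{M},\eta}(a)$ is the number of $b\neq a$ such that $(a,b)$ realizes $\eta$, and $\deg(a):=(\deg_{\mathcal{M},\eta_1}(a),\ldots,\deg_{\mathcal{M},\eta_\ell}(a))\in\mathbb{N}^\ell$; $\mathcal{M}\models\forall x\,\deg(x)\in S$ means $\deg(a)\in S$ for all $a$. For vectors $\bar v_0,\ldots,\bar v_k\in\mathbb{N}^\ell$, $L(\bar v_0;\bar v_1,\ldots,\bar v_k)=\{\bar v_0+\sum_{i=1}^k n_i\bar v_i : n_i\in\mathbb{N}\}$. *)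

From mathcomp Require Import all_boot.
From Stdlib Require List.
Set Implicit Arguments. Unset Strict Implicit. Unset Printing Implicit Defensive.

Inductive qf (nU nB : nat) (V : Type) : Type :=
| QTrue
| QEq  of V & V
| QU   of 'I_nU & V
| QR   of 'I_nB & V & V
| QNot of qf nU nB V
| QAnd of qf nU nB V & qf nU nB V
| QOr  of qf nU nB V & qf nU nB V.

Arguments QTrue {nU nB V}.

Section Sem.
Variables (nU nB : nat) (M : finType)
  (UI : 'I_nU -> M -> bool) (RI : 'I_nB -> M -> M -> bool).

Fixpoint qf_eval (V : Type) (s : V -> M) (f : qf nU nB V) : bool :=
  match f with
  | QTrue => true
  | QEq x y => s x == s y
  | QU u x => UI u (s x)
  | QR r x y => RI r (s x) (s y)
  | QNot g => ~~ qf_eval s g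
  | QAnd g h => qf_eval s g && qf_eval s h
  | QOr g h => qf_eval s g || qf_eval s h
  end.

(** Two-variable assignment x |-> a, y |-> b (x = false, y = true). *)
Definition asg2 (a b : M) : bool -> M := fun v => if v then b else a.

End Sem.

Inductive guard (nB : nat) : Type :=
| GEq
| GFwd of 'I_nB
| GBwd of 'I_nB.

Arguments GEq {nB}.

Definition guard_holds (nB : nat) (M : finType) (RI : 'I_nB -> M -> M -> bool)
  (e : guard nB) (a b : M) : bool :=
  match e with
  | GEq => a == b
  | GFwd r => RI r a b
  | GBwd r => RI r b a
  end.

(** A 2-type (for x <> y) is determined by the truth values of R(x,y), R(y,x)
    for every binary R. *)
Definition twotype (nB : nat) : finType := {ffun 'I_nB -> bool * bool}.

Definition null_type (nB : nat) : twotype nB := [ffun _ => (false, false)].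

(** The non-null 2-types eta_1, ..., eta_l (l = 4^nB - 1). *)
Definition nntype (nB : nat) : finType :=
  {t : twotype nB | t != null_type nB}.

(** Vectors of N^l, indexed by the non-null 2-types. *)
Definition degvec (nB : nat) := {ffun nntype nB -> nat}.

Definition tp2 (nB : nat) (M : finType) (RI : 'I_nB -> M -> M -> bool)
  (a b : M) : twotype nB := [ffun r => (RI r a b, RI r b a)].

Definition deg (nB : nat) (M : finType) (RI : 'I_nB -> M -> M -> bool)
  (a : M) : degvec nB :=
  [ffun eta : nntype nB => #|[set b | (b != a) && (tp2 RI a b == val eta)]|].

Definition same1type (nU nB : nat) (M : finType)
  (UI : 'I_nU -> M -> bool) (RI : 'I_nB -> M -> M -> bool) (a b : M) : Prop :=
  (forall u, UI u a = UI u b) /\ (forall r, RI r a a = RI r b b).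

Definition inL (nB : nat) (v0 : degvec nB) (vs : seq (degvec nB))
  (w : degvec nB) : Prop :=
  exists c : 'I_(size vs) -> nat,
    w = [ffun t => v0 t + \sum_(i < size vs) c i * (tnth (in_tuple vs) i) t].

(** A semilinear set S = union of the L(v_{i,0}; v_{i,1},...,v_{i,k_i}),
    given as the list of pairs (v_{i,0}, [v_{i,1};...;v_{i,k_i}]). *)
Definition semilin (nB : nat) := seq (degvec nB * seq (degvec nB)).

Section Models.
Variables (nU nB : nat)
  (gamma : qf nU nB unit)
  (axs : seq (guard nB * qf nU nB bool))
  (S : semilin nB).
Variables (M : finType)
  (UI : 'I_nU -> M -> bool) (RI : 'I_nB -> M -> M -> bool).

Definition sat_common : Prop :=
  (forall a : M, qf_eval UI RI (fun _ : unit => a) gamma) /\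
  (forall (e : guard nB) (alpha : qf nU nB bool), List.In (e, alpha) axs ->
      forall a b : M, guard_holds RI e a b -> qf_eval UI RI (asg2 a b) alpha).

Definition sat_Psi : Prop :=
  sat_common /\
  (forall a : M, exists2 Si, Si \in S & inL Si.1 Si.2 (deg RI a)).

Definition cond_xi : Prop :=
  forall a : M, exists2 Si, Si \in S &
    (deg RI a = Si.1 \/ deg RI a \in Si.2).

Definition cond_phi : Prop :=
  forall a : M, (forall Si, Si \in S -> deg RI a <> Si.1) ->
    exists b : M, same1type UI RI a b /\
      exists2 Sj, Sj \in S & (deg RI a \in Sj.2 /\ deg RI b = Sj.1).

Definition sat_Psi_star : Prop := [/\ sat_common, cond_xi & cond_phi].

End Models.

Definition has_finite_model (nU nB : nat)
  (P : forall M : finType, ('I_nU -> M -> bool) -> ('I_nB -> M -> M -> bool) -> Prop)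
  : Prop :=
  exists (M : finType) (UI : 'I_nU -> M -> bool) (RI : 'I_nB -> M -> M -> bool),
    0 < #|M| /\ P M UI RI.

(** Both directions are model transformations that keep the universal part
    of the formulas ([forall x gamma] and the guarded axioms): every element
    of the new structure realizes a 1-type of the old one, and every non-null
    pair of it realizes a 2-type of the old one ([sat_common_transfer]).

    (=>) Splitting.  In a model of [Psi] write [deg a = v_{i,0} + u_1 + ... +
    u_m] with periods [u_k] of [S_i], distribute the neighbours of [a] into
    blocks of these sizes ([neighbour_labelling]) and replace [a] by copies
    [(a, 0), ..., (a, m)], the copy [(a, k)] keeping the neighbours of block
    [k] ([split_deg]).  Every degree is now [v_{i,0}] or a period, and a copy
    of a period has the sibling [(a, 0)] of degree [v_{i,0}]: this is [Psi*].

    (<=) Merging.  In a model of [Psi*] glue every element whose degree is a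
    period of [S_j] onto an element of the same 1-type with degree [v_{j,0}],
    given by (phi).  To avoid double edges the gluing is done in many disjoint
    copies, shifted along a Sidon set of [Z_3^I] ([glue_edge_unique]), as a
    quotient of the copies ([quot_common], [quot_deg]); merged elements have
    degree [v_{j,0}] plus periods of [S_j] ([merged_psi]). *)

From mathcomp Require Import all_boot ssralg zmodp.
Set Implicit Arguments. Unset Strict Implicit. Unset Printing Implicit Defensive.
Import GRing.Theory.

Section Transfer.
Variables (nU nB : nat).

Lemma qf_eval_transfer (V : Type) (M1 M2 : finType)
  (UI1 : 'I_nU -> M1 -> bool) (RI1 : 'I_nB -> M1 -> M1 -> bool)
  (UI2 : 'I_nU -> M2 -> bool) (RI2 : 'I_nB -> M2 -> M2 -> bool)
  (s1 : V -> M1) (s2 : V -> M2) :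
  (forall v v', (s1 v == s1 v') = (s2 v == s2 v')) ->
  (forall u v, UI1 u (s1 v) = UI2 u (s2 v)) ->
  (forall r v v', RI1 r (s1 v) (s1 v') = RI2 r (s2 v) (s2 v')) ->
  forall f : qf nU nB V, qf_eval UI1 RI1 s1 f = qf_eval UI2 RI2 s2 f.
Proof. by move=> Heq HU HR; elim=> //= [g -> | g -> h -> | g -> h ->]. Qed.

Lemma tp2E (M : finType) (RI : 'I_nB -> M -> M -> bool) a b r :
  tp2 RI a b r = (RI r a b, RI r b a).
Proof. by rewrite ffunE. Qed.

Lemma tp2_nullP (M : finType) (RI : 'I_nB -> M -> M -> bool) a b :
  (tp2 RI a b == null_type nB) = [forall r, ~~ RI r a b && ~~ RI r b a].
Proof.
apply/eqP/forallP => [Hnull r | Hno].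
  by have := congr1 (fun f : twotype nB => f r) Hnull; rewrite tp2E ffunE => -[-> ->].
by apply/ffunP=> r; rewrite tp2E ffunE; case/andP: (Hno r) => /negbTE -> /negbTE ->.
Qed.

Lemma tp2_nonnull (M : finType) (RI : 'I_nB -> M -> M -> bool) a b r :
  RI r a b || RI r b a -> tp2 RI a b != null_type nB.
Proof.
move=> Hr; rewrite tp2_nullP; apply/negP => /forallP /(_ r).
by case: (RI r a b) Hr; case: (RI r b a).
Qed.

Variables (M1 M2 : finType)
  (UI1 : 'I_nU -> M1 -> bool) (RI1 : 'I_nB -> M1 -> M1 -> bool)
  (UI2 : 'I_nU -> M2 -> bool) (RI2 : 'I_nB -> M2 -> M2 -> bool).

Definition agree1 (u : M2) (x : M1) : Prop :=
  (forall t, UI2 t u = UI1 t x) /\ (forall r, RI2 r u u = RI1 r x x).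

Definition agree2 (u w : M2) (x y : M1) : Prop :=
  [/\ agree1 u x, agree1 w y, (u == w) = (x == y) & tp2 RI2 u w = tp2 RI1 x y].

Lemma agree2_diag u x : agree1 u x -> agree2 u u x x.
Proof.
move=> [HU HR]; split=> //; rewrite ?eqxx //.
by apply/ffunP => r; rewrite !tp2E HR.
Qed.

Lemma agree2_eval u w x y (alpha : qf nU nB bool) : agree2 u w x y ->
  qf_eval UI2 RI2 (asg2 u w) alpha = qf_eval UI1 RI1 (asg2 x y) alpha.
Proof.
move=> [[Uu Ru] [Uw Rw] Heq Htp].
have Ruw r : RI2 r u w = RI1 r x y by move/ffunP/(_ r): Htp; rewrite !tp2E => -[].
have Rwu r : RI2 r w u = RI1 r y x by move/ffunP/(_ r): Htp; rewrite !tp2E => -[].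
apply: qf_eval_transfer.
- by case; case; rewrite //= ?eqxx // eq_sym Heq eq_sym.
- by move=> t []; rewrite /= ?Uu ?Uw.
- by move=> r [] []; rewrite /= ?Ru ?Rw ?Ruw ?Rwu.
Qed.

Lemma agree2_guard u w x y (e : guard nB) : agree2 u w x y ->
  guard_holds RI2 e u w = guard_holds RI1 e x y.
Proof.
move=> [_ _ Heq Htp]; case: e => [|r|r] //=;
  by move/ffunP/(_ r): Htp; rewrite !tp2E => -[].
Qed.

Lemma guard_nonnull (M : finType) (RI : 'I_nB -> M -> M -> bool) e a b :
  guard_holds RI e a b -> a != b -> tp2 RI a b != null_type nB.
Proof.
case: e => [|r|r] /= Hg Hab; first by rewrite Hg in Hab.
  by apply: (tp2_nonnull (r := r)); rewrite Hg.
by apply: (tp2_nonnull (r := r)); rewrite Hg orbT.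
Qed.

Lemma sat_common_transfer (gamma : qf nU nB unit)
  (axs : seq (guard nB * qf nU nB bool)) :
  (forall u : M2, exists x : M1, agree1 u x) ->
  (forall u w : M2, u != w -> tp2 RI2 u w != null_type nB ->
     exists x y : M1, agree2 u w x y) ->
  sat_common gamma axs UI1 RI1 -> sat_common gamma axs UI2 RI2.
Proof.
move=> H1 H2 [Hgamma Haxs]; split=> [u | e alpha Hin u w Hguard].
  have [x [Ux Rx]] := H1 u.
  rewrite (qf_eval_transfer (UI2 := UI1) (RI2 := RI1) (s2 := fun _ => x)) //.
  by move=> [] []; rewrite !eqxx.
suff [x [y Hxy]] : exists x y, agree2 u w x y.
  rewrite (agree2_eval _ Hxy); apply: Haxs Hin _ _ _.
  by rewrite -(agree2_guard _ Hxy).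
have [/eqP <- | Huw] := boolP (u == w).
  by have [x Hx] := H1 u; exists x, x; apply: agree2_diag.
by apply: H2 => //; apply: guard_nonnull Hguard Huw.
Qed.
End Transfer.

Lemma subset_of_card (T : finType) (A : {set T}) k :
  k <= #|A| -> exists2 B : {set T}, B \subset A & #|B| = k.
Proof.
move=> Hk; exists [set x in take k (enum A)].
  by apply/subsetP => x; rewrite inE => /mem_take; rewrite mem_enum.
rewrite cardsE (card_uniqP _) ?take_uniq ?enum_uniq //.
by rewrite size_takel // -cardE.
Qed.

Lemma partition_by_sizes (T : finType) (w : seq nat) (A : {set T}) :
  #|A| = sumn w ->
  exists f : T -> nat, (forall x, x \in A -> f x < size w) /\
    forall i, i < size w -> #|[set x in A | f x == i]| = nth 0 w i.
Proof.
elim: w A => [|n w IH] A /= HA.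
  exists (fun _ => 0); split=> // x xA.
  by move: HA; rewrite (cardD1 x) xA.
have [B sBA cB] : exists2 B : {set T}, B \subset A & #|B| = n.
  by apply: subset_of_card; rewrite HA leq_addr.
have [f [Hf_lt Hf_card]] : exists f : T -> nat,
    (forall x, x \in A :\: B -> f x < size w) /\
    forall i, i < size w -> #|[set x in A :\: B | f x == i]| = nth 0 w i.
  by apply: IH; rewrite cardsDS // cB HA addKn.
exists (fun x => if x \in B then 0 else (f x).+1); split.
  move=> x xA; case: ifP => // xB; rewrite ltnS; apply: Hf_lt.
  by rewrite inE xB xA.
case=> [|i] /= Hi.
  rewrite -cB; apply: eq_card => x; rewrite !inE.
  by case xB: (x \in B); rewrite ?andbT ?andbF //= (subsetP sBA).
rewrite -Hf_card //; apply: eq_card => x; rewrite !inE.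
by case xB: (x \in B); rewrite /= ?andbF.
Qed.

Section LinearSets.
Variables (nB : nat) (v0 : degvec nB) (vs : seq (degvec nB)).

Lemma inL_periods w : inL v0 vs w -> exists2 ps : seq (degvec nB),
  all (mem vs) ps & forall t, w t = v0 t + sumn (map (fun v : degvec nB => v t) ps).
Proof.
case=> c ->.
exists (flatten [seq nseq (c i) (tnth (in_tuple vs) i) | i <- enum 'I_(size vs)]).
  apply/allP => v /flattenP [s /mapP [i _ ->]] /nseqP [-> _].
  exact: mem_tnth.
move=> t; rewrite ffunE; congr (_ + _); rewrite -big_enum /=.
elim: (enum _) => [|i l IH]; first by rewrite big_nil.
by rewrite big_cons /= map_cat sumn_cat IH map_nseq sumn_nseq mulnC.
Qed.

Lemma inL_base : inL v0 vs v0.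
Proof. by exists (fun _ => 0); apply/ffunP => t; rewrite ffunE big1 ?addn0. Qed.

Lemma inL_add w v : inL v0 vs w -> v \in vs -> inL v0 vs [ffun t => w t + v t].
Proof.
case=> c -> vin; have vlt : index v vs < size vs by rewrite index_mem.
pose i0 := Ordinal vlt.
exists (fun i => c i + (i == i0)); apply/ffunP => t; rewrite !ffunE -addnA.
have -> : v t = tnth (in_tuple vs) i0 t by rewrite (tnth_nth v0) /= nth_index.
rewrite -(big_pred1_eq addn i0 (fun i => tnth (in_tuple vs) i t)) big_mkcond /=.
rewrite -big_split /=; congr (_ + _); apply: eq_bigr => i _.
by rewrite mulnDl; case: eqP => [->|_]; rewrite ?mul0n ?mul1n.
Qed.

Lemma inL_sum (T : finType) (P : pred T) (F : T -> degvec nB) :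
  (forall x, P x -> F x \in vs) ->
  inL v0 vs [ffun t => v0 t + \sum_(x | P x) F x t].
Proof.
move=> HF; elim: (index_enum T) => [|x s IH].
  by have := inL_base; congr inL; apply/ffunP => t; rewrite ffunE big_nil addn0.
case Px: (P x); last first.
  by move: IH; congr inL; apply/ffunP => t; rewrite !ffunE big_cons Px.
have := inL_add IH (HF x Px); congr inL; apply/ffunP => t.
by rewrite !ffunE big_cons Px [F x t + _]addnC addnA.
Qed.
End LinearSets.

(** The element [a] is replaced by
    copies [(a, i)], [i < size (pv a)], and [(a, i)] is joined to [(c, j)] iff
    [a] was joined to [c] and the labels match ([part a c = i], [part c a = j]);
    the copy [(a, i)] then has degree exactly [nth _ (pv a) i]. *)
Section Split.
Variables (nU nB : nat) (M : finType)
  (UI : 'I_nU -> M -> bool) (RI : 'I_nB -> M -> M -> bool).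
Variables (pv : M -> seq (degvec nB)) (part : M -> M -> nat).
Let d0 : degvec nB := [ffun _ => 0].
Hypothesis part_lt : forall a c, part a c < size (pv a).
Hypothesis part_card : forall a (eta : nntype nB) i, i < size (pv a) ->
  #|[set c | (c != a) && (tp2 RI a c == val eta) && (part a c == i)]| =
  nth d0 (pv a) i eta.

Definition split_bound := \max_(a : M) size (pv a).

Lemma split_bound_gt a i : i < size (pv a) -> i < split_bound.
Proof. by move=> Hi; apply: leq_trans Hi (leq_bigmax a). Qed.

Local Notation split_dom := {p : M * 'I_split_bound | p.2 < size (pv p.1)}.

Definition base (p : split_dom) : M := (val p).1.
Definition label (p : split_dom) : nat := (val p).2.
Definition mk_split a i (Hi : i < size (pv a)) : split_dom :=
  Sub (a, Ordinal (split_bound_gt Hi)) Hi.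

Lemma label_lt (p : split_dom) : label p < size (pv (base p)).
Proof. exact: valP p. Qed.

Lemma base_mk a i (Hi : i < size (pv a)) : base (mk_split Hi) = a.
Proof. by []. Qed.

Lemma label_mk a i (Hi : i < size (pv a)) : label (mk_split Hi) = i.
Proof. by []. Qed.

Lemma split_eqE (p q : split_dom) :
  (p == q) = (base p == base q) && (label p == label q).
Proof.
by case: p q => [[a i] Hi] [[c j] Hj]; rewrite -val_eqE.
Qed.

Definition split_UI t (p : split_dom) := UI t (base p).
Definition split_RI r (p q : split_dom) :=
  if base p == base q then (label p == label q) && RI r (base p) (base p)
  else [&& RI r (base p) (base q), part (base p) (base q) == label p
         & part (base q) (base p) == label q].

Lemma split_tp2_diff (p q : split_dom) : base p != base q ->
  tp2 split_RI p q = if (part (base p) (base q) == label p) &&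
                        (part (base q) (base p) == label q)
                     then tp2 RI (base p) (base q) else null_type nB.
Proof.
move=> Hne; apply/ffunP => r; rewrite !tp2E /split_RI ifN // ifN; last by rewrite eq_sym.
case: eqVneq => _; case: eqVneq => _;
  by rewrite /= ?andbT ?andbF ?tp2E ?ffunE.
Qed.

Lemma split_tp2_same (p q : split_dom) : p != q -> base p = base q ->
  tp2 split_RI p q = null_type nB.
Proof.
move=> Hne Hb; rewrite split_eqE Hb eqxx /= in Hne.
apply/ffunP => r; rewrite tp2E ffunE /split_RI Hb eqxx.
by rewrite (negbTE Hne) eq_sym (negbTE Hne).
Qed.

Lemma split_agree1 (p : split_dom) : agree1 UI RI split_UI split_RI p (base p).
Proof. by split=> // r; rewrite /split_RI !eqxx. Qed.

(** The [eta]-neighbours of the copy [p] of [a] correspond to the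
    [eta]-neighbours [c] of [a] labelled [label p], via [c |-> (c, part c a)]. *)
Lemma split_neighbour (p q : split_dom) (eta : twotype nB) :
  eta != null_type nB ->
  (q != p) && (tp2 split_RI p q == eta) =
  [&& base q != base p, tp2 RI (base p) (base q) == eta,
      part (base p) (base q) == label p & part (base q) (base p) == label q].
Proof.
move=> Heta; have [Hb | Hb] := eqVneq (base q) (base p).
  rewrite /=; apply/negbTE; apply/andP => -[Hne /eqP Htp].
  by move: Heta; rewrite -Htp split_tp2_same 1?eq_sym ?eqxx.
have Hqp : q != p by apply: contraNneq Hb => ->.
rewrite Hqp /= split_tp2_diff; last by rewrite eq_sym.
by case: ifP => _; rewrite ?andbT ?andbF // eq_sym (negbTE Heta).
Qed.

Lemma split_deg (p : split_dom) : deg split_RI p = nth d0 (pv (base p)) (label p).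
Proof.
apply/ffunP => eta; rewrite ffunE -(part_card eta (valP p)).
pose back c : split_dom := mk_split (part_lt c (base p)).
rewrite -(@card_in_imset _ _ back); last by move=> c c' _ _ /(congr1 base).
apply: eq_card => q; rewrite !inE split_neighbour ?(valP eta) //.
apply/idP/imsetP => [/and4P [Hb Htp Hl1 /eqP Hl2] | [c]].
  exists (base q); first by rewrite !inE Hb Htp Hl1.
  by apply/eqP; rewrite split_eqE eqxx -Hl2 eqxx.
by rewrite !inE => /andP [/andP [Hc Htp] Hl] ->; rewrite base_mk label_mk Hc Htp Hl eqxx.
Qed.

Lemma split_common gamma axs :
  sat_common gamma axs UI RI -> sat_common gamma axs split_UI split_RI.
Proof.
apply: sat_common_transfer => [u | u w Huw Hnn].
  by exists (base u); exact: split_agree1.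
have Hb : base u != base w by apply: contra Hnn => /eqP Hb; rewrite split_tp2_same.
have := split_tp2_diff Hb; case: ifP => _ Htp; last by rewrite Htp eqxx in Hnn.
exists (base u), (base w); split=> //; try exact: split_agree1.
by rewrite (negbTE Huw) (negbTE Hb).
Qed.
End Split.

Notation split_dom pv :=
  {p : _ * 'I_(split_bound pv) | p.2 < size (pv p.1)}.

Lemma neighbour_labelling (nB : nat) (M : finType) (RI : 'I_nB -> M -> M -> bool)
  (pv : M -> seq (degvec nB)) :
  (forall a t, deg RI a t = sumn (map (fun v : degvec nB => v t) (pv a))) ->
  (forall a, 0 < size (pv a)) ->
  exists part : M -> M -> nat, (forall a c, part a c < size (pv a)) /\
    forall a (eta : nntype nB) i, i < size (pv a) ->
    #|[set c | (c != a) && (tp2 RI a c == val eta) && (part a c == i)]| =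
    nth [ffun _ => 0] (pv a) i eta.
Proof.
move=> Hsum Hsz.
pose nbrs a (eta : nntype nB) := [set c | (c != a) && (tp2 RI a c == val eta)].
have /fin_all_exists [F HF] : forall ae : M * nntype nB, exists f : M -> nat,
    (forall c, c \in nbrs ae.1 ae.2 -> f c < size (pv ae.1)) /\
    forall i, i < size (pv ae.1) -> #|[set c in nbrs ae.1 ae.2 | f c == i]| =
      nth 0 (map (fun v : degvec nB => v ae.2) (pv ae.1)) i.
  move=> [a eta]; have Hn : #|nbrs a eta| = sumn [seq v eta | v : degvec nB <- pv a].
    by rewrite -Hsum ffunE.
  have [f [Hlt Hcard]] := partition_by_sizes Hn.
  by exists f; rewrite size_map in Hlt Hcard.
pose part a c := if c == a then 0
  else if insub (tp2 RI a c) is Some eta then F (a, eta) c else 0.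
exists part; split=> [a c | a eta i Hi].
  rewrite /part; case: eqP => [_ | /eqP Hca]; first exact: Hsz.
  case: insubP => [eta _ Htp | _]; last exact: Hsz.
  by apply: (HF (a, eta)).1; rewrite !inE Hca Htp /=.
rewrite -(nth_map _ 0 (fun v : degvec nB => v eta)) // -(HF (a, eta)).2 //.
apply: eq_card => c; rewrite !inE.
have [-> // | Hca] /= := eqVneq c a.
by rewrite /part (negbTE Hca); case: eqP => //= Htp; rewrite Htp valK.
Qed.

Lemma psi_to_star (nU nB : nat)
  (gamma : qf nU nB unit) (axs : seq (guard nB * qf nU nB bool))
  (S : semilin nB) :
  has_finite_model (fun M UI RI => @sat_Psi nU nB gamma axs S M UI RI) ->
  has_finite_model (fun M UI RI => @sat_Psi_star nU nB gamma axs S M UI RI).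
Proof.
case=> M [UI [RI [Hne [Hcom HPsi]]]].
(* [deg a = v_{i,0} + sum of the periods (X a).2] with [S_i = (X a).1]. *)
have /fin_all_exists [X HX] : forall a : M,
    exists x : (degvec nB * seq (degvec nB)) * seq (degvec nB),
    [/\ x.1 \in S, all (mem x.1.2) x.2 &
        forall t, deg RI a t = x.1.1 t + sumn (map (fun v : degvec nB => v t) x.2)].
  move=> a; have [Si HSi HL] := HPsi a; have [ps Hps Hdeg] := inL_periods HL.
  by exists (Si, ps).
(* copy [(a, 0)] gets degree [v_{i,0}], the others the periods *)
pose pv a := (X a).1.1 :: (X a).2.
have [|//|part [part_lt part_card]] := @neighbour_labelling nB M RI pv.
  by move=> a t; have [_ _ ->] := HX a.
have Hdeg (p : split_dom pv) :
    deg (split_RI RI part) p = nth [ffun _ => 0] (pv (base p)) (label p).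
  exact: split_deg.
have Hhead a : 0 < size (pv a) by [].
exists (split_dom pv), (split_UI UI (pv := pv)), (split_RI RI part); split.
  by have /card_gt0P [a _] := Hne; apply/card_gt0P; exists (mk_split (Hhead a)).
split; first exact: split_common.
- move=> p; have [HS /allP Hall _] := HX (base p); exists (X (base p)).1 => //.
  rewrite Hdeg; case: (label p) (label_lt p) => [|i] Hi /=; [by left | right].
  exact/Hall/mem_nth.
- move=> p Hbad; have [HS /allP Hall _] := HX (base p).
  exists (mk_split (Hhead (base p))); split.
    by split=> // r; rewrite /split_RI !eqxx.
  exists (X (base p)).1 => //; rewrite !Hdeg; split=> //.
  case: (label p) (label_lt p) (Hdeg p) => [_ /= Hd | i Hi _].
    by case: (Hbad _ HS).
  exact/Hall/mem_nth.
Qed.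

Section Copies.
Variables (nU nB : nat) (M K : finType)
  (UI : 'I_nU -> M -> bool) (RI : 'I_nB -> M -> M -> bool).

Definition copies_UI t (x : M * K) := UI t x.1.
Definition copies_RI r (x y : M * K) := (x.2 == y.2) && RI r x.1 y.1.

Lemma copies_tp2_same x y : x.2 = y.2 -> tp2 copies_RI x y = tp2 RI x.1 y.1.
Proof. by move=> e; apply/ffunP => r; rewrite !tp2E /copies_RI e eqxx. Qed.

Lemma copies_tp2_diff x y : x.2 != y.2 -> tp2 copies_RI x y = null_type nB.
Proof.
move=> e; apply/ffunP => r.
by rewrite tp2E ffunE /copies_RI (negbTE e) eq_sym (negbTE e).
Qed.

Lemma copies_same_copy x y : tp2 copies_RI x y != null_type nB -> x.2 = y.2.
Proof. by apply: contraNeq => /copies_tp2_diff ->. Qed.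

Lemma copies_common gamma axs :
  sat_common gamma axs UI RI -> sat_common gamma axs copies_UI copies_RI.
Proof.
have H1 u : agree1 UI RI copies_UI copies_RI u u.1.
  by split=> // r; rewrite /copies_RI eqxx.
apply: sat_common_transfer => [u | u w Huw Hnn]; first by exists u.1.
have Hc := copies_same_copy Hnn; exists u.1, w.1; split=> //.
  by rewrite (negbTE Huw); apply/esym/negbTE; apply: contra Huw => /eqP Hx;
     apply/eqP/injective_projections.
by rewrite copies_tp2_same.
Qed.

Lemma copies_deg x : deg copies_RI x = deg RI x.1.
Proof.
apply/ffunP => eta; rewrite !ffunE.
rewrite -[RHS](@card_in_imset _ _ (fun m : M => (m, x.2))); last by move=> ? ? _ _ [].
apply: eq_card => y; rewrite !inE; apply/andP/imsetP => [[Hyx Htp] | [m]].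
  have Hc : y.2 = x.2.
    by apply/esym/copies_same_copy; rewrite (eqP Htp) (valP eta).
  exists y.1; last by case: y Hc {Hyx Htp} => ? ? /= ->.
  rewrite inE -copies_tp2_same 1?Hc // Htp andbT; apply: contra Hyx => /eqP Hm.
  by apply/eqP/injective_projections.
rewrite inE => /andP [Hmx Htp] ->; split; first by apply: contra Hmx => /eqP <-.
by rewrite copies_tp2_same.
Qed.
End Copies.

Lemma card_pairs (T : finType) (P : pred T) (Q : T -> pred T) :
  #|[set xy : T * T | P xy.1 && Q xy.1 xy.2]| = \sum_(x | P x) #|[set y | Q x y]|.
Proof.
rewrite -sum1_card (eq_bigl (fun xy : T * T => P xy.1 && Q xy.1 xy.2)); last first.
  by move=> xy; rewrite inE.
rewrite -(pair_big_dep P Q (fun _ _ => 1)) /=; apply: eq_bigr => x _.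
by rewrite -sum1_card; apply: eq_bigl => y; rewrite inE.
Qed.

Section Quotient.
Variables (nU nB : nat) (B N : finType)
  (UI : 'I_nU -> B -> bool) (RI : 'I_nB -> B -> B -> bool).
Variables (pi : B -> N) (sg : N -> B).
Hypothesis pi_sg : forall u, pi (sg u) = u.
Hypothesis fibre_1type : forall x, agree1 UI RI UI RI x (sg (pi x)).
Hypothesis fibre_null : forall x y, x != y -> pi x = pi y ->
  tp2 RI x y = null_type nB.
Hypothesis edge_unique : forall x y x' y', pi x = pi x' -> pi y = pi y' ->
  pi x != pi y -> tp2 RI x y != null_type nB -> tp2 RI x' y' != null_type nB ->
  x = x' /\ y = y'.

Definition quot_UI t (u : N) := UI t (sg u).
Definition quot_RI r (u w : N) :=
  if u == w then RI r (sg u) (sg u)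
  else [exists x, exists y, [&& pi x == u, pi y == w & RI r x y]].

Lemma quot_tp2 x y : pi x != pi y -> tp2 RI x y != null_type nB ->
  tp2 quot_RI (pi x) (pi y) = tp2 RI x y.
Proof.
move=> Hne Hnn; apply/ffunP => r.
rewrite !tp2E /quot_RI (negbTE Hne) eq_sym (negbTE Hne); congr (_, _).
  apply/existsP/idP => [[x' /existsP [y' /and3P [/eqP Hx /eqP Hy Hr]]] | Hr].
    have Hnn' : tp2 RI x' y' != null_type nB by apply: (tp2_nonnull (r := r)); rewrite Hr.
    by have [-> ->] := edge_unique (esym Hx) (esym Hy) Hne Hnn Hnn'.
  by exists x; apply/existsP; exists y; rewrite !eqxx Hr.
apply/existsP/idP => [[y' /existsP [x' /and3P [/eqP Hy /eqP Hx Hr]]] | Hr].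
  have Hnn' : tp2 RI x' y' != null_type nB.
    by apply: (tp2_nonnull (r := r)); rewrite Hr orbT.
  by have [-> ->] := edge_unique (esym Hx) (esym Hy) Hne Hnn Hnn'.
by exists y; apply/existsP; exists x; rewrite !eqxx Hr.
Qed.

Lemma quot_lift u w : u != w -> tp2 quot_RI u w != null_type nB ->
  exists x y, [/\ pi x = u, pi y = w & tp2 RI x y != null_type nB].
Proof.
move=> Hne; rewrite tp2_nullP => /forallPn [r]; rewrite negb_and !negbK.
rewrite /quot_RI (negbTE Hne) eq_sym (negbTE Hne).
case/orP => /existsP [x /existsP [y /and3P [/eqP Hx /eqP Hy Hr]]].
  by exists x, y; split=> //; apply: (tp2_nonnull (r := r)); rewrite Hr.
by exists y, x; split=> //; apply: (tp2_nonnull (r := r)); rewrite Hr orbT.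
Qed.

Lemma quot_agree1 x : agree1 UI RI quot_UI quot_RI (pi x) x.
Proof.
have [HU HR] := fibre_1type x.
by split=> [t | r]; rewrite /quot_UI /quot_RI ?eqxx ?HU ?HR.
Qed.

Lemma quot_common gamma axs :
  sat_common gamma axs UI RI -> sat_common gamma axs quot_UI quot_RI.
Proof.
apply: sat_common_transfer => [u | u w Huw Hnn].
  by exists (sg u); rewrite -{1}[u]pi_sg; apply: quot_agree1.
have [x [y [Hx Hy Hxy]]] := quot_lift Huw Hnn; subst u w.
exists x, y; split; [exact: quot_agree1 | exact: quot_agree1 | | exact: quot_tp2].
by rewrite (negbTE Huw); apply/esym/negbTE; apply: contra Huw => /eqP ->.
Qed.

Definition fibre_edges u (eta : nntype nB) :=
  [set xy : B * B | (pi xy.1 == u) && ((xy.2 != xy.1) && (tp2 RI xy.1 xy.2 == val eta))].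

Lemma fibre_edges_out u eta xy : xy \in fibre_edges u eta -> pi xy.2 != u.
Proof.
rewrite inE => /and3P [/eqP Hx Hyx /eqP Htp]; apply/eqP => Hy.
have := valP eta; rewrite -Htp fibre_null 1?eq_sym ?Hx ?Hy ?eqxx //.
Qed.

Lemma quot_nbrs u eta :
  [set w | (w != u) && (tp2 quot_RI u w == val eta)] =
  [set pi xy.2 | xy in fibre_edges u eta].
Proof.
apply/setP => w; rewrite inE; apply/andP/imsetP => [[Hwu Htp] | [[x y] Hxy ->]].
  have Hnn : tp2 quot_RI u w != null_type nB by rewrite (eqP Htp) (valP eta).
  have [x [y [Hx Hy Hxy]]] := quot_lift (negbT (etrans (eq_sym u w) (negbTE Hwu))) Hnn.
  subst u w; have Hne : pi x != pi y by rewrite eq_sym.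
  exists (x, y) => //; rewrite inE /= eqxx -(quot_tp2 Hne Hxy) Htp andbT.
  by apply: contra Hwu => /eqP ->.
have Hout := fibre_edges_out Hxy; split=> //.
move: Hxy Hout; rewrite inE /= => /and3P [/eqP <- _ /eqP Htp] Hout.
have Hnn : tp2 RI x y != null_type nB by rewrite Htp (valP eta).
rewrite quot_tp2 //; last by rewrite eq_sym.
by rewrite Htp.
Qed.

Lemma quot_deg u (eta : nntype nB) :
  deg quot_RI u eta = \sum_(x | pi x == u) deg RI x eta.
Proof.
rewrite ffunE quot_nbrs card_in_imset; last first.
  move=> [x y] [x' y'] Hxy Hxy' /= Hy.
  have Hout := fibre_edges_out Hxy.
  move: Hxy Hxy'; rewrite !inE /=.
  move=> /and3P [/eqP Hx _ /eqP Htp] /and3P [/eqP Hx' _ /eqP Htp'].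
  have Hne : pi x != pi y by rewrite Hx eq_sym.
  have Hnn : tp2 RI x y != null_type nB by rewrite Htp (valP eta).
  have Hnn' : tp2 RI x' y' != null_type nB by rewrite Htp' (valP eta).
  by have [-> ->] := edge_unique (etrans Hx (esym Hx')) Hy Hne Hnn Hnn'.
rewrite (card_pairs (fun x => pi x == u)
                    (fun x y => (y != x) && (tp2 RI x y == val eta))).
by apply: eq_bigr => x _; rewrite ffunE.
Qed.
End Quotient.

Lemma addr_cancel2 (V : zmodType) (a b p q p' q' : V) :
  (a + p = b + p' -> a + q = b + q' -> p + q' = p' + q)%R.
Proof.
move=> E1 E2; apply: (@addrI _ (a + b)%R).
by rewrite addrACA E1 [(a + b)%R]addrC [RHS]addrACA E2.
Qed.

Section Sidon.
Variable I : finType.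
Definition sidon_group := {ffun I -> 'Z_3}.
Definition dl (i : I) : sidon_group := [ffun k => ((i == k)%:R)%R].

Lemma z3_sum2 (a b c d : bool) :
  ((a%:R + b%:R : 'Z_3) = c%:R + d%:R)%R -> a + b = c + d.
Proof. by case: a; case: b; case: c; case: d. Qed.

Lemma sidon i1 i2 i3 i4 : (dl i1 + dl i2 = dl i3 + dl i4)%R ->
  (i1 = i3 /\ i2 = i4) \/ (i1 = i4 /\ i2 = i3).
Proof.
move=> E; have C k : (i1 == k) + (i2 == k) = (i3 == k) + (i4 == k).
  by apply: z3_sum2; have := congr1 (fun f : sidon_group => f k) E; rewrite !ffunE.
case: (eqVneq i1 i3) => [e13 | n13].
  by left; split=> //; have := C i2; rewrite e13 eqxx => /addnI; case: eqP.
right; have := C i1; rewrite eqxx [i3 == i1]eq_sym (negbTE n13) /=.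
case: (eqVneq i4 i1) => [e41 | n41]; last by case: (i2 == i1).
move=> C1; split=> //; have := C i2; rewrite e41.
case: (eqVneq i1 i2) => [e12 | n12]; first by move: C1; rewrite e12 eqxx.
by rewrite eqxx /= => /esym; case: eqP.
Qed.

Lemma dl_inj : injective dl.
Proof.
move=> i k E; have := @sidon i i k k; rewrite E => /(_ erefl).
by case=> -[].
Qed.
End Sidon.

(** Fix, for every element [a] whose degree is not a base vector
    [v_{j,0}], an element [t a] of the same 1-type whose degree is a base
    vector [v_{jf a, 0}] such that [deg a] is a period of [S_{jf a}].  Take
    copies of [M] indexed by [J * G] ([J] indexes the components of [S], [G]
    is the Sidon group on the tags [option (M * J)]) and glue every such [a]
    of copy [(j, g)] onto [t a] of copy [(jf a, g + dl (a, j) - dl None)].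
    Glued pairs of the copies never produce two edges between the same two
    merged elements, by the Sidon property, so the merged structure is a
    quotient in the sense above; the merged elements have degree
    [v_{j,0} + (sum of periods of S_j)]. *)
Section Merge.
Variables (nU nB : nat) (S : semilin nB) (M : finType)
  (UI : 'I_nU -> M -> bool) (RI : 'I_nB -> M -> M -> bool).

Local Notation J := 'I_(size S).

Definition comp (j : J) : degvec nB * seq (degvec nB) :=
  nth ([ffun _ => 0], [::]) S j.

Lemma comp_in j : comp j \in S.
Proof. exact: mem_nth. Qed.

Lemma comp_onto Si : Si \in S -> exists j : J, comp j = Si.
Proof.
move=> HSi; have Hi : index Si S < size S by rewrite index_mem.
by exists (Ordinal Hi); rewrite /comp nth_index.
Qed.

Definition at_base (m : M) := [exists j : J, deg RI m == (comp j).1].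

Variables (t : M -> M) (jf : M -> J).
Hypothesis t_1type : forall a, ~~ at_base a -> same1type UI RI a (t a).
Hypothesis jf_period : forall a, ~~ at_base a -> deg RI a \in (comp (jf a)).2.
Hypothesis t_base : forall a, ~~ at_base a -> deg RI (t a) = (comp (jf a)).1.

Definition tgt m := if at_base m then m else t m.

Lemma tgt_id m : at_base m -> tgt m = m.
Proof. by rewrite /tgt => ->. Qed.

Lemma tgt_at_base m : at_base (tgt m).
Proof.
rewrite /tgt; case: ifP => // /negbT Hm.
by apply/existsP; exists (jf m); rewrite t_base.
Qed.

Local Notation G := (sidon_group (option (M * J))).
Local Notation B := (M * (J * G))%type.
Local Notation N := ({m : M | at_base m} * (J * G))%type.

Definition tag (x : B) : option (M * J) :=
  if at_base x.1 then None else Some (x.1, x.2.1).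
Definition shift (x : B) : G := (dl (tag x) - dl None)%R.
Definition col (x : B) : J := if at_base x.1 then x.2.1 else jf x.1.
Definition glue (x : B) : N :=
  (Sub (tgt x.1) (tgt_at_base x.1), (col x, (x.2.2 + shift x)%R)).
Definition rep (u : N) : B := (val u.1, u.2).

Lemma glue_rep u : glue (rep u) = u.
Proof.
case: u => [[b Hb] [j g]]; rewrite /glue /rep /col /shift /tag /= Hb subrr addr0.
by congr (_, _); apply/val_inj; rewrite /= tgt_id.
Qed.

Lemma glue_tag_inj x y : glue x = glue y -> tag x = tag y -> x = y.
Proof.
case: x => m [c g]; case: y => m' [c' g'] Hglue Htag.
have -> : g = g' by case: Hglue => _ _; rewrite /shift Htag => /addIr.
case: Hglue => Htgt Hcol _; rewrite /tag /col /= in Htag Hcol.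
case Hm: (at_base m) Htag Hcol; case Hm': (at_base m') => // Htag Hcol.
  by rewrite !tgt_id // in Htgt; rewrite Htgt Hcol.
by case: Htag => <- <-.
Qed.

Lemma shift_inj x y : shift x = shift y -> tag x = tag y.
Proof. by rewrite /shift => /addIr /dl_inj. Qed.

Lemma glue_fibre_null x y : x != y -> glue x = glue y ->
  tp2 (copies_RI RI) x y = null_type nB.
Proof.
move=> Hxy Hg; have [Hc | Hc] := eqVneq x.2 y.2; last exact: copies_tp2_diff.
have Hs : (x.2.2 + shift x = y.2.2 + shift y)%R by move: Hg => [_ _ ->].
rewrite Hc in Hs; have := glue_tag_inj Hg (shift_inj (addrI _ Hs)).
by move/eqP; rewrite (negbTE Hxy).
Qed.

Lemma same_tag_none x y : tag x = tag y -> x.2 = y.2 -> x != y -> tag x = None.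
Proof.
case: x y => [m [c g]] [m' [c' g']]; rewrite /tag /=.
case: (at_base m) => //; case: (at_base m') => // -[-> _] ->.
by rewrite eqxx.
Qed.

Lemma glue_edge_unique x y x' y' : glue x = glue x' -> glue y = glue y' ->
  glue x != glue y ->
  tp2 (copies_RI RI) x y != null_type nB -> tp2 (copies_RI RI) x' y' != null_type nB ->
  x = x' /\ y = y'.
Proof.
move=> Hx Hy Hxy Hnn Hnn'.
have Hc := copies_same_copy Hnn; have Hc' := copies_same_copy Hnn'.
have Hsx : (x.2.2 + shift x = x'.2.2 + shift x')%R by case: Hx.
have Hsy : (y.2.2 + shift y = y'.2.2 + shift y')%R by case: Hy.
have Hsum : (dl (tag x) + dl (tag y') = dl (tag x') + dl (tag y))%R.
  rewrite -Hc -Hc' in Hsy; have := addr_cancel2 Hsx Hsy.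
  by rewrite /shift addrACA [RHS]addrACA; apply: addIr.
have Hne : x != y by apply: contraNneq Hxy => ->.
have Hne' : x' != y' by apply: contraNneq Hxy => Exy; rewrite Hx Hy Exy.
case: (sidon Hsum) => [[Htx Hty] | [Htx Hty]].
  by split; apply: glue_tag_inj.
have Hn := same_tag_none Htx Hc Hne; have Hn' := same_tag_none (esym Hty) Hc' Hne'.
split; apply: glue_tag_inj => //; first by rewrite Hn Hn'.
by rewrite -Htx Hty Hn Hn'.
Qed.

Lemma glue_1type x : agree1 (copies_UI UI) (copies_RI RI) (copies_UI UI) (copies_RI RI)
  x (rep (glue x)).
Proof.
rewrite /copies_UI /copies_RI /rep /glue /tgt /=.
case: ifP => [_ | /negbT Hx]; split=> [u | r]; rewrite ?eqxx //=.
  exact: (t_1type Hx).1.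
exact: (t_1type Hx).2.
Qed.

Definition glued (u : N) (mc : M * J) :=
  [&& ~~ at_base mc.1, tgt mc.1 == val u.1 & jf mc.1 == u.2.1].

Definition unglue (u : N) (mc : M * J) : B :=
  (mc.1, (mc.2, (u.2.2 - (dl (Some mc) - dl None))%R)).

Lemma unglue_inj u : injective (unglue u).
Proof. by move=> [m c] [m' c'] [-> ->]. Qed.

Lemma fibre_nonrep u x :
  (glue x == u) && (x != rep u) = (x \in [set unglue u mc | mc in [set mc | glued u mc]]).
Proof.
apply/andP/imsetP => [[/eqP Hx Hxu] | [mc]].
  have Hbad : ~~ at_base x.1.
    apply: contra Hxu => Hb; apply/eqP/glue_tag_inj; first by rewrite glue_rep.
    by rewrite /tag Hb /rep /= (valP u.1).
  exists (x.1, x.2.1).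
    rewrite inE /glued Hbad -Hx /= -[col x]/(if at_base x.1 then _ else _).
    by rewrite (negbTE Hbad) !eqxx.
  have Hs : shift x = (dl (Some (x.1, x.2.1)) - dl None)%R.
    by rewrite /shift /tag (negbTE Hbad).
  by rewrite /unglue -Hx /glue /= -Hs addrK; case: x {Hx Hxu Hbad Hs} => m [c g].
case: mc => m c; rewrite inE /glued => /and3P [/= Hbad /eqP Htgt /eqP Hjf] ->.
split; last by apply: contra Hbad => /eqP/(congr1 fst) /= ->; exact: (valP u.1).
case: u Htgt Hjf => [[b Hb] [j g]] /= Htgt Hjf; apply/eqP.
rewrite /glue /unglue /col /shift /tag /= (negbTE Hbad) subrK Hjf.
by congr (_, _); apply/val_inj.
Qed.

Lemma fibre_sum (u : N) (f : M -> nat) :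
  \sum_(x | glue x == u) f x.1 = f (val u.1) + \sum_(mc | glued u mc) f mc.1.
Proof.
rewrite (bigD1 (rep u)) ?glue_rep //=; congr (_ + _).
rewrite (eq_bigl _ _ (fibre_nonrep u)) big_imset /=; last by move=> ? ? _ _ /unglue_inj.
by apply: eq_bigl => mc; rewrite inE.
Qed.

Local Notation merged_UI := (quot_UI (copies_UI UI) rep).
Local Notation merged_RI := (quot_RI (copies_RI RI) glue rep).

Lemma merged_deg (u : N) : deg merged_RI u =
  [ffun eta => deg RI (val u.1) eta + \sum_(mc | glued u mc) deg RI mc.1 eta].
Proof.
apply/ffunP => eta; rewrite ffunE (quot_deg rep glue_fibre_null glue_edge_unique).
rewrite -(fibre_sum u (fun m => deg RI m eta)); apply: eq_bigr => x _.
by rewrite copies_deg.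
Qed.

Lemma merged_psi (u : N) : exists2 Si, Si \in S & inL Si.1 Si.2 (deg merged_RI u).
Proof.
rewrite merged_deg; case: (pickP (glued u)) => [mc Hmc | Hnone].
  exists (comp u.2.1); first exact: comp_in.
  move: (Hmc); rewrite /glued => /and3P [Hbad /eqP Htgt /eqP Hjf].
  have -> : deg RI (val u.1) = (comp u.2.1).1.
    by rewrite -Htgt /tgt (negbTE Hbad) t_base // Hjf.
  apply: inL_sum => mc' /and3P [Hbad' _ /eqP <-]; exact: jf_period.
have /existsP [j /eqP Hj] := valP u.1.
exists (comp j); first exact: comp_in.
have := inL_base (comp j).1 (comp j).2; congr inL; apply/ffunP => eta.
by rewrite ffunE big_pred0 // addn0 Hj.
Qed.

Lemma merged_common gamma axs :
  sat_common gamma axs UI RI -> sat_common gamma axs merged_UI merged_RI.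
Proof.
move=> Hcom; apply: (quot_common glue_rep glue_1type glue_edge_unique).
exact: copies_common.
Qed.
End Merge.

Lemma star_to_psi (nU nB : nat)
  (gamma : qf nU nB unit) (axs : seq (guard nB * qf nU nB bool))
  (S : semilin nB) :
  has_finite_model (fun M UI RI => @sat_Psi_star nU nB gamma axs S M UI RI) ->
  has_finite_model (fun M UI RI => @sat_Psi nU nB gamma axs S M UI RI).
Proof.
case=> M [UI [RI [Hne [Hcom Hxi Hphi]]]].
have /fin_all_exists [F HF] : forall a : M, exists tj : M * 'I_(size S),
    ~~ at_base S RI a -> [/\ same1type UI RI a tj.1,
      deg RI a \in (comp tj.2).2 & deg RI tj.1 = (comp tj.2).1].
  move=> a; case: (boolP (at_base S RI a)) => [/existsP [j _] | Ha].
    by exists (a, j).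
  have Hbad Si : Si \in S -> deg RI a <> Si.1.
    by move=> /comp_onto [j <-] Hj; move/existsP: Ha; apply; exists j; apply/eqP.
  have [b [Hab [Sj /comp_onto [j <-] [Ha_per Hb_base]]]] := Hphi a Hbad.
  by exists (b, j).
pose t a := (F a).1; pose jf a := (F a).2.
have t_1type a : ~~ at_base S RI a -> same1type UI RI a (t a) by case/HF.
have jf_period a : ~~ at_base S RI a -> deg RI a \in (comp (jf a)).2 by case/HF.
have t_base a : ~~ at_base S RI a -> deg RI (t a) = (comp (jf a)).1 by case/HF.
exists ({m : M | at_base S RI m} *
        ('I_(size S) * sidon_group (option (M * 'I_(size S)))))%type.
exists (quot_UI (copies_UI UI) (@rep _ S M RI)).
exists (quot_RI (copies_RI RI) (glue t_base) (@rep _ S M RI)).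
split; last by split; [exact: merged_common | exact: merged_psi].
have /card_gt0P [a _] := Hne; apply/card_gt0P.
by exists (glue t_base (a, (jf a, 0%R))).
Qed.

Theorem mainTheorem13 (nU nB : nat)
  (gamma : qf nU nB unit) (axs : seq (guard nB * qf nU nB bool))
  (S : semilin nB) :
  has_finite_model (fun M UI RI => @sat_Psi nU nB gamma axs S M UI RI) <->
  has_finite_model (fun M UI RI => @sat_Psi_star nU nB gamma axs S M UI RI).
Proof. by split; [exact: psi_to_star | exact: star_to_psi]. Qed.
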